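(* (1) If $q$ is even, then $\mathrm{Pr}(\mathrm{Fig}(T))=m_T$. (2) If $q$ is odd, then $\mathrm{Pr}(\mathrm{Fig}(T))=\{T^\phi,T^{\phi^2}\}\cup\mathcal S_{-1}\cup\bigcup\{\mathcal S_\theta:\theta\in\mathbb{F}_{q^3}^*,\ N(\theta)\text{ a nonzero square in }\mathbb{F}_q\}$. Further $|\mathrm{Pr}(\mathrm{Fig}(T))|$ equals $2+\frac{q-1}{2}(q^2+q+1)$ if $q\equiv1\pmod 4$ and $2+\frac{q+1}{2}(q^2+q+1)$ if $q\equiv3\pmod4$.
   Context: Let $q$ be a prime power, $\mathbb{F}_{q^3}^*=\mathbb{F}_{q^3}\setminus\{0\}$, $N(x)=x^{q^2+q+1}$. Points of $\mathrm{PG}(2,q^3)$ have homogeneous coordinates $(x,y,z)$ and lines $[a,b,c]$. Let $\phi$ be the collineation $(x,y,z)\mapsto(z^q,x^q,y^q)$ (on lines $[d,e,f]\mapsto[f^q,d^q,e^q]$). A point has Type II (resp. III) if its $\phi$-orbit is three collinear (resp. non-collinear) points; a line has Type III if its $\phi$-orbit is three non-concurrent lines. For a Type III point $X$, the Fig-block is $\mathrm{Fig}(X)=\mathcal E_X\cup\mathcal F_X$, where $\mathcal E_X$ is the set of Type II points on the line $X^\phi X^{\phi^2}$ and $\mathcal F_X=\{\ell^\phi\cap\ell^{\phi^2}:\ell\text{ a Type III line through }X\}$. Let $T=(0,0,1)$ (a Type III point), $T^\phi=(1,0,0)$, $T^{\phi^2}=(0,1,0)$, and $m_T=T^\phi T^{\phi^2}$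 the line $[0,0,1]$. For a point $P\neq T$, $\mathrm{Pr}(P)=TP\cap m_T$, and for a set of points not containing $T$, $\mathrm{Pr}$ is applied elementwise. For $\theta\in\mathbb{F}_{q^3}^*$, $\mathcal S_\theta=\{(x\theta,x^q,0):x\in\mathbb{F}_{q^3}^*\}$. *)

From HB Require Import structures.
From mathcomp Require Import all_boot all_order all_algebra all_field.
Set Implicit Arguments. Unset Strict Implicit. Unset Printing Implicit Defensive.
Import GRing.Theory.
Local Open Scope ring_scope.

(* PG(2, F) with F = F_{q^3}.  A projective point (or line) is represented as
   the set of all nonzero scalar multiples of a nonzero vector of F^3.
   Points and lines are both such classes; incidence is the usual
   x a + y b + z c = 0. *)
Section PG.
Variables (F : finFieldType) (q : nat).

Definition vec := (F * F * F)%type.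
Definition v0 (v : vec) : F := v.1.1.
Definition v1 (v : vec) : F := v.1.2.
Definition v2 (v : vec) : F := v.2.
Definition vscale (c : F) (v : vec) : vec := (c * v0 v, c * v1 v, c * v2 v).
Definition vnz (v : vec) : bool := v != (0, 0, 0).

Definition pclass (v : vec) : {set vec} :=
  [set w | vnz w && [exists c : F, w == vscale c v]].

Definition points : {set {set vec}} := [set pclass v | v in [set v | vnz v]].
Definition lines : {set {set vec}} := points.

Definition dotv (v l : vec) : F := v0 v * v0 l + v1 v * v1 l + v2 v * v2 l.

Definition inc (P L : {set vec}) : bool :=
  [exists v in P, exists l in L, dotv v l == 0].

Definition phiv (v : vec) : vec := (v2 v ^+ q, v0 v ^+ q, v1 v ^+ q).
Definition phiS (P : {set vec}) : {set vec} := [set phiv w | w in P].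

Definition collinear (P Q R : {set vec}) : bool :=
  [exists L in lines, [&& inc P L, inc Q L & inc R L]].
Definition concurrent (L M N : {set vec}) : bool :=
  [exists P in points, [&& inc P L, inc P M & inc P N]].

Definition typeII (P : {set vec}) : bool :=
  [&& P \in points, P != phiS P & collinear P (phiS P) (phiS (phiS P))].
Definition typeIII (P : {set vec}) : bool :=
  [&& P \in points, P != phiS P & ~~ collinear P (phiS P) (phiS (phiS P))].
Definition typeIIIline (L : {set vec}) : bool :=
  [&& L \in lines, L != phiS L & ~~ concurrent L (phiS L) (phiS (phiS L))].

Definition Eset (X : {set vec}) : {set {set vec}} :=
  [set P in points | typeII P &&
     [exists L in lines, [&& inc (phiS X) L, inc (phiS (phiS X)) L & inc P L]]].
Definition Fset (X : {set vec}) : {set {set vec}} :=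
  [set P in points |
     [exists L in lines, [&& typeIIIline L, inc X L, inc P (phiS L)
                            & inc P (phiS (phiS L))]]].
Definition Fig (X : {set vec}) : {set {set vec}} := Eset X :|: Fset X.

Definition T : {set vec} := pclass (0, 0, 1).
Definition mT : {set vec} := pclass (0, 0, 1).

Definition Pr (S : {set {set vec}}) : {set {set vec}} :=
  [set Q in points | inc Q mT &&
     [exists P in S, (P != T) &&
        [exists L in lines, [&& inc T L, inc P L & inc Q L]]]].

Definition Nrm (x : F) : F := x ^+ (q ^ 2 + q + 1).

Definition Stheta (th : F) : {set {set vec}} :=
  [set pclass (x * th, x ^+ q, 0) | x in [set x : F | x != 0]].

Definition nzsqFq (a : F) : bool :=
  [exists s : F, [&& s ^+ q == s, s != 0 & a == s ^+ 2]].

Definition bigS : {set {set vec}} :=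
  \bigcup_(th : F | (th != 0) && nzsqFq (Nrm th)) Stheta th.

End PG.

From Pilot Require Import Defs.
From HB Require Import structures.
From mathcomp Require Import all_boot all_order all_algebra all_field.
From mathcomp Require Import ring zify.
Set Implicit Arguments. Unset Strict Implicit. Unset Printing Implicit Defensive.
Import GRing.Theory.
Local Open Scope ring_scope.

(* Every point of m_T other than T^phi^2 = <(0,1,0)> is some <(1,s,0)>, and Pr forgets
   the last coordinate.  The phi-orbit of <(a,b,0)> has determinant N(a) + N(b), hence
   E_T is the set of <(x,y,0)> with N(x) + N(y) = 0, the Type III lines through T are
   the [a,b,0] with N(a) + N(b) <> 0, and [a,b,0]^phi, [a,b,0]^phi^2 meet in a point
   projecting to <(sigma a, sigma b, 0)>, where sigma x = N(x)/x.  So <(1,s,0)> lies in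
   Pr(Fig(T)) iff N(s) = -1 or s = sigma t with N(t) <> -1.  As N(sigma t) = N(t)^2 and
   N(s) = u^2 with u in F_q^* gives s = sigma (u/s), the latter means that N(s) is a
   nonzero square of F_q: always true for q even.  For q odd the count follows from
   N : F^* -> F_q^* being onto with fibres of size q^2+q+1, from F_q^* having (q-1)/2
   squares, and from -1 being a square iff q = 1 mod 4.  Finally S_theta is the set of
   <(1,s,0)> with N(s) N(theta) = 1, as the kernel of N consists of the x^(q-1). *)

Section ProjectivePlane.
Variable F : finFieldType.
Implicit Types (a b c d s x y : F) (u v w l p : vec F) (P Q L M N : {set vec F}).

Lemma vnzE a b c : vnz (a, b, c) = [|| a != 0, b != 0 | c != 0].
Proof. by rewrite /vnz !xpair_eqE !negb_and orbA. Qed.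

Lemma vnz_xy0 x y : vnz (x, y, 0) = (x != 0) || (y != 0).
Proof. by rewrite vnzE eqxx orbF. Qed.

Lemma pclassP v w : reflect (vnz w /\ exists c, w = vscale c v) (w \in pclass v).
Proof.
rewrite inE; apply: (iffP andP) => [[-> /existsP[c /eqP ->]]|[-> [c ->]]].
  by split => //; exists c.
by split => //; apply/existsP; exists c.
Qed.

Lemma vscaleA c d v : vscale c (vscale d v) = vscale (c * d) v.
Proof. by case: v => [[a b] e]; rewrite /vscale /= !mulrA. Qed.

Lemma vnz_scale c v : vnz (vscale c v) = (c != 0) && vnz v.
Proof.
case: v => [[a b] e]; rewrite /vscale /= !vnzE !mulf_eq0 !negb_or.
by case: (c == 0).
Qed.

Lemma mem_pclass v : vnz v -> v \in pclass v.
Proof.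
move=> nz; apply/pclassP; split => //; exists 1.
by case: v {nz} => [[a b] e]; rewrite /vscale /= !mul1r.
Qed.

Lemma pclass_scale c v : c != 0 -> pclass (vscale c v) = pclass v.
Proof.
move=> c0; apply/setP => w; apply/pclassP/pclassP => -[nz [d Ew]]; split => //.
  by exists (d * c); rewrite Ew vscaleA.
by exists (d / c); rewrite Ew vscaleA divfK.
Qed.

Lemma pclass_eq_scale v w : vnz v -> pclass v = pclass w ->
  exists2 c, c != 0 & v = vscale c w.
Proof.
move=> nz E; have := mem_pclass nz; rewrite E => /pclassP[_ [c Ec]].
by exists c => //; move: nz; rewrite Ec vnz_scale => /andP[].
Qed.

Lemma dotv_scale c d v l : dotv (vscale c v) (vscale d l) = c * d * dotv v l.
Proof.
by case: v => [[a b] e]; case: l => [[a' b'] e']; rewrite /dotv /vscale /v0 /v1 /v2 /=; ring.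
Qed.

Lemma dotvC v l : dotv v l = dotv l v.
Proof. by case: v => [[a b] e]; case: l => [[a' b'] e']; rewrite /dotv /=; ring. Qed.

Lemma inc_pclass v l : vnz v -> vnz l -> inc (pclass v) (pclass l) = (dotv v l == 0).
Proof.
move=> nv nl; apply/existsP/idP => [[v' /andP[/pclassP[nv' [c Ev]]]]|vl0].
  case/existsP => l' /andP[/pclassP[nl' [d El]]].
  move: nv' nl'; rewrite Ev El dotv_scale !mulf_eq0 !vnz_scale.
  by case/andP => /negbTE -> _ /andP[/negbTE -> _].
by exists v; rewrite mem_pclass //=; apply/existsP; exists l; rewrite mem_pclass.
Qed.

Lemma incC P L : inc P L = inc L P.
Proof.
apply/existsP/existsP => -[v /andP[vP /existsP[l /andP[lL vl]]]].
  by exists l; rewrite lL /=; apply/existsP; exists v; rewrite vP dotvC.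
by exists l; rewrite lL /=; apply/existsP; exists v; rewrite vP dotvC.
Qed.

Lemma concurrentE L M N : concurrent L M N = collinear L M N.
Proof. by rewrite /concurrent /collinear /lines; apply: eq_existsb => P; rewrite !(incC P). Qed.

Lemma pointsP P : reflect (exists2 v, vnz v & P = pclass v) (P \in points F).
Proof.
apply: (iffP imsetP) => [[v]|[v nv ->]]; first by rewrite inE => nv ->; exists v.
by exists v; rewrite ?inE.
Qed.

Lemma pclass_points v : vnz v -> pclass v \in points F.
Proof. by move=> nv; apply/pointsP; exists v. Qed.

Lemma collinear_pclass u v w : vnz u -> vnz v -> vnz w ->
  collinear (pclass u) (pclass v) (pclass w) =
  [exists l, vnz l && [&& dotv u l == 0, dotv v l == 0 & dotv w l == 0]].
Proof.
move=> nu nv nw; apply/existsP/existsP => [[L /andP[/pointsP[l nl ->]]]|[l /andP[nl]]].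
  by rewrite !inc_pclass // => H; exists l; rewrite nl.
by rewrite -!inc_pclass // => H; exists (pclass l); rewrite pclass_points.
Qed.

Definition det3 u v w : F :=
  v0 u * (v1 v * v2 w - v2 v * v1 w) - v1 u * (v0 v * v2 w - v2 v * v0 w)
  + v2 u * (v0 v * v1 w - v1 v * v0 w).

(* Cramer's rule: each coordinate of [l] times [det3 u v w] is a combination of the [dotv _ l]. *)
Lemma det3_ortho_eq0 u v w l : dotv u l = 0 -> dotv v l = 0 -> dotv w l = 0 ->
  det3 u v w != 0 -> ~~ vnz l.
Proof.
case: u => [[u0 u1] u2]; case: v => [[x0 x1] x2]; case: w => [[w0 w1] w2].
case: l => [[l0 l1] l2]; rewrite /dotv /= => H1 H2 H3 D.
set d := det3 _ _ _ in D.
have E0 : d * l0 = (u0 * l0 + u1 * l1 + u2 * l2) * (x1 * w2 - x2 * w1)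
  + (x0 * l0 + x1 * l1 + x2 * l2) * (w1 * u2 - w2 * u1)
  + (w0 * l0 + w1 * l1 + w2 * l2) * (u1 * x2 - u2 * x1) by rewrite /d /det3 /v0 /v1 /v2 /=; ring.
have E1 : d * l1 = (u0 * l0 + u1 * l1 + u2 * l2) * (x2 * w0 - x0 * w2)
  + (x0 * l0 + x1 * l1 + x2 * l2) * (w2 * u0 - w0 * u2)
  + (w0 * l0 + w1 * l1 + w2 * l2) * (u2 * x0 - u0 * x2) by rewrite /d /det3 /v0 /v1 /v2 /=; ring.
have E2 : d * l2 = (u0 * l0 + u1 * l1 + u2 * l2) * (x0 * w1 - x1 * w0)
  + (x0 * l0 + x1 * l1 + x2 * l2) * (w0 * u1 - w1 * u0)
  + (w0 * l0 + w1 * l1 + w2 * l2) * (u0 * x1 - u1 * x0) by rewrite /d /det3 /v0 /v1 /v2 /=; ring.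
rewrite H1 H2 H3 !mul0r !addr0 in E0 E1 E2.
have -> : l0 = 0 by apply: (mulfI D); rewrite E0 mulr0.
have -> : l1 = 0 by apply: (mulfI D); rewrite E1 mulr0.
have -> : l2 = 0 by apply: (mulfI D); rewrite E2 mulr0.
by rewrite vnzE eqxx.
Qed.

Lemma pclass_xy0_eq x y (u w : F) : (x != 0) || (y != 0) -> (u != 0) || (w != 0) ->
  x * w = y * u -> pclass (x, y, 0) = pclass (u, w, 0).
Proof.
move=> nxy nuw E.
suff [c c0 ->] : exists2 c, c != 0 & ((x, y, 0) : vec F) = vscale c (u, w, 0).
  exact: pclass_scale.
case/orP: nuw => [u0|w0].
  have x0 : x != 0.
    apply: contraTneq nxy => x0; move: E; rewrite x0 mul0r => /esym/eqP.
    by rewrite mulf_eq0 (negbTE u0) orbF => /eqP ->; rewrite eqxx.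
  exists (x / u); first by rewrite mulf_neq0 ?invr_eq0.
  by rewrite /vscale /= mulr0 divfK // mulrAC E mulfK.
have y0 : y != 0.
  apply: contraTneq nxy => y0; move: E; rewrite y0 mul0r => /eqP.
  by rewrite mulf_eq0 (negbTE w0) orbF => /eqP ->; rewrite eqxx.
exists (y / w); first by rewrite mulf_neq0 ?invr_eq0.
by rewrite /vscale /= mulr0 divfK // mulrAC -E mulfK.
Qed.


Lemma vnz001 : vnz ((0, 0, 1) : vec F).
Proof. by rewrite vnzE oner_eq0 !eqxx. Qed.

Lemma inc_T l : vnz l -> inc (T F) (pclass l) = (v2 l == 0).
Proof.
move=> nl; rewrite /T inc_pclass ?vnz001 //.
by case: l {nl} => [[a b] c]; rewrite /dotv /v2 /= !mul0r mul1r !add0r.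
Qed.

Lemma inc_mT v : vnz v -> inc (pclass v) (mT F) = (v2 v == 0).
Proof. by move=> nv; rewrite incC inc_T. Qed.

Lemma pclass_T p : vnz p -> (pclass p == T F) = (v0 p == 0) && (v1 p == 0).
Proof.
case: p => [[p0 p1] p2] np; rewrite /v0 /v1 /=; apply/eqP/andP => [/(pclass_eq_scale np)|].
  by case=> c _ [-> -> _]; rewrite !mulr0.
case=> /eqP p00 /eqP p10; move: np; rewrite p00 p10 vnzE !eqxx /= => p20.
by rewrite /T -(pclass_scale (0, 0, 1) p20) /vscale /= !mulr0 mulr1.
Qed.

Lemma mT_point_cases Q : Q \in points F -> inc Q (mT F) ->
  Q = pclass (0, 1, 0) \/ exists s, Q = pclass (1, s, 0).
Proof.
case/pointsP => -[[x y] z] nv ->; rewrite inc_mT // /v2 /= => /eqP z0.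
move: nv; rewrite {}z0 vnz_xy0 => nxy.
have [x0|x0] := eqVneq x 0.
  by left; apply: pclass_xy0_eq; rewrite ?oner_eq0 ?orbT // x0 mulr0 mul0r.
right; exists (y / x); apply: pclass_xy0_eq; rewrite ?oner_eq0 //.
by rewrite mulrC divfK // mulr1.
Qed.

Lemma vnz1s s : vnz ((1, s, 0) : vec F).
Proof. by rewrite vnzE oner_eq0. Qed.

Lemma vnz100 : vnz ((1, 0, 0) : vec F).
Proof. by rewrite vnzE oner_eq0. Qed.

Lemma vnz010 : vnz ((0, 1, 0) : vec F).
Proof. by rewrite vnzE oner_eq0 eqxx. Qed.

Lemma pclass_1s_inj : injective (fun s => pclass ((1, s, 0) : vec F)).
Proof.
move=> s s' /(pclass_eq_scale (vnz1s s))[c _].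
by rewrite /vscale /= mulr1 mulr0 => -[<- ->]; rewrite mul1r.
Qed.

Lemma pclass_010_neq_1s s : pclass ((0, 1, 0) : vec F) != pclass (1, s, 0).
Proof.
apply/eqP => /(pclass_eq_scale vnz010)[c _].
by rewrite /vscale /= mulr1 => -[<-]; rewrite mul0r => /eqP; rewrite oner_eq0.
Qed.

Lemma pclass_xy0_in_Pr (S : {set {set vec F}}) x y : {subset S <= points F} -> (x != 0) || (y != 0) ->
  pclass (x, y, 0) \in Pr S <-> exists p, [/\ vnz p, pclass p \in S,
    (v0 p != 0) || (v1 p != 0) & x * v1 p = y * v0 p].
Proof.
move=> Spts nxy; have nxy0 : vnz (x, y, 0) by rewrite vnz_xy0.
split.
  rewrite inE => /and3P[_ _ /existsP[P /and3P[PS PT /existsP[L /andP[Lpts]]]]].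
  have /pointsP[p np EP] := Spts _ PS; have /pointsP[l nl EL] := Lpts.
  move: PS PT; rewrite {}EP {}EL inc_T // !inc_pclass // => PS PT /and3P[l2 pl xyl].
  exists p; split => //; first by rewrite -negb_and -pclass_T.
  case: p {np PS PT} pl => [[p0 p1] p2]; case: l nl l2 xyl => [[l0 l1] l2] nl /= /eqP l20.
  move: nl; rewrite {}l20 vnz_xy0 /dotv /v0 /v1 /v2 /= !mulr0 !addr0 => nl /eqP xyl /eqP pl.
  have E0 : (x * p1 - y * p0) * l0 = p1 * (x * l0 + y * l1) - y * (p0 * l0 + p1 * l1) by ring.
  have E1 : (x * p1 - y * p0) * l1 = x * (p0 * l0 + p1 * l1) - p0 * (x * l0 + y * l1) by ring.
  rewrite xyl pl !mulr0 subrr in E0 E1; apply/eqP; rewrite -subr_eq0; apply/eqP.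
  by case/orP: nl => [l0n|l1n]; [apply: (mulIf l0n) | apply: (mulIf l1n)]; rewrite mul0r.
case=> -[[p0 p1] p2] [np PS /= nP E]; rewrite /v0 /v1 /= in nP E.
rewrite inE pclass_points // inc_mT //= eqxx /=; apply/existsP; exists (pclass (p0, p1, p2)).
rewrite PS pclass_T // negb_and nP /=.
have nl : vnz (p1, - p0, 0) by rewrite vnz_xy0 oppr_eq0 orbC.
apply/existsP; exists (pclass (p1, - p0, 0)); rewrite pclass_points //.
rewrite inc_T // eqxx !inc_pclass // /dotv /v0 /v1 /v2 /=.
apply/andP; split; apply/eqP; first by ring.
by rewrite mulr0 addr0 mulrN E subrr.
Qed.

Lemma cross_eq_trans x y (u w p0 p1 : F) : (p0 != 0) || (p1 != 0) ->
  x * p1 = y * p0 -> u * p1 = w * p0 -> x * w = y * u.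
Proof.
move=> /orP[p0n|p1n] E1 E2.
  apply: (mulIf p0n); transitivity (x * (u * p1)); first by rewrite E2; ring.
  by rewrite mulrCA E1; ring.
apply: (mulIf p1n); transitivity (w * (x * p1)); first by ring.
by rewrite E1 mulrCA -E2; ring.
Qed.

End ProjectivePlane.

Lemma card_fibres (T T' : finType) (A : {set T}) (B : {set T'}) (f : T -> T') :
  {in A, forall x, f x \in B} -> #|A| = (\sum_(c in B) #|[set x in A | f x == c]|)%N.
Proof.
move=> fAB; rewrite -sum1_card (partition_big f (mem B)) //=.
by apply: eq_bigr => c _; rewrite -sum1_card; apply: eq_bigl => x; rewrite !inE.
Qed.

Lemma card_roots_expn (F : finFieldType) k (c : F) (A : {set F}) : (0 < k)%N ->
  {in A, forall x, x ^+ k = c} -> (#|A| <= k)%N.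
Proof.
move=> k0 Ak; have P0 : 'X^k - c%:P != 0 by rewrite -size_poly_eq0 size_XnsubC.
rewrite cardE -ltnS -(size_XnsubC c k0); apply: max_poly_roots P0 _ (enum_uniq _).
by apply/allP => x; rewrite mem_enum => /Ak xk; rewrite rootE !hornerE xk subrr.
Qed.

Section CubicExtension.
Variables (F : finFieldType) (q : nat).
Hypothesis cardF : #|F| = (q ^ 3)%N.
Implicit Types (a b c s t th u x y : F) (v p : vec F).

Local Notation Nrm := (Defs.Nrm q).

Lemma q_gt1 : (1 < q)%N.
Proof. by have := card_finNzRing_gt1 F; rewrite cardF; case: q => [|[]]. Qed.

Lemma q_gt0 : (0 < q)%N.
Proof. exact: ltnW q_gt1. Qed.

Lemma frobK3 x : x ^+ q ^+ q ^+ q = x.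
Proof.
by rewrite -!exprM -{2}(expf_card x) cardF !expnS expn0 muln1 mulnA.
Qed.

Lemma frob_eq0 x : (x ^+ q == 0) = (x == 0).
Proof. by rewrite expf_eq0 q_gt0. Qed.

Lemma frob0 : (0 : F) ^+ q = 0.
Proof. by rewrite expr0n eqn0Ngt q_gt0. Qed.

Lemma phiv_scale c v : phiv q (vscale c v) = vscale (c ^+ q) (phiv q v).
Proof. by case: v => [[a b] e]; rewrite /phiv /vscale /= !exprMn. Qed.

Lemma vnz_phiv v : vnz (phiv q v) = vnz v.
Proof. by case: v => [[a b] e]; rewrite /phiv /= !vnzE !frob_eq0 orbC orbA. Qed.

Lemma phiS_pclass v : phiS q (pclass v) = pclass (phiv q v).
Proof.
apply/setP => w; apply/imsetP/pclassP => [[w' /pclassP[nw' [c Ew']] ->]|[nw [c Ew]]].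
  by rewrite vnz_phiv; split => //; exists (c ^+ q); rewrite Ew' phiv_scale.
exists (vscale (c ^+ q ^+ q) v); last by rewrite phiv_scale frobK3.
apply/pclassP; split; last by exists (c ^+ q ^+ q).
by rewrite -vnz_phiv phiv_scale frobK3 -Ew.
Qed.

Lemma NrmE x : Nrm x = x * x ^+ q * x ^+ q ^+ q.
Proof. by rewrite /Defs.Nrm -exprM mulnn !exprD expr1; ring. Qed.

Lemma NrmM x y : Nrm (x * y) = Nrm x * Nrm y.
Proof. exact: exprMn. Qed.

Lemma NrmV x : Nrm x^-1 = (Nrm x)^-1.
Proof. exact: exprVn. Qed.

Lemma Nrm_eq0 x : (Nrm x == 0) = (x == 0).
Proof. by rewrite /Defs.Nrm expf_eq0 addn1. Qed.

Lemma Nrm0 : Nrm (0 : F) = 0.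
Proof. by apply/eqP; rewrite Nrm_eq0. Qed.

Lemma Nrm1 : Nrm (1 : F) = 1.
Proof. exact: expr1n. Qed.

Lemma Nrm_frob x : Nrm x ^+ q = Nrm x.
Proof. by rewrite !NrmE !exprMn frobK3; ring. Qed.

Lemma Nrm_fixed x : x ^+ q = x -> Nrm x = x ^+ 3.
Proof. by move=> xq; rewrite NrmE !xq; ring. Qed.

Definition sigma x := x ^+ q * x ^+ q ^+ q.

Lemma sigmaE x : x * sigma x = Nrm x.
Proof. by rewrite NrmE /sigma mulrA. Qed.

Lemma sigmaM x y : sigma (x * y) = sigma x * sigma y.
Proof. by rewrite /sigma !exprMn; ring. Qed.

Lemma sigmaV x : sigma x^-1 = (sigma x)^-1.
Proof. by rewrite /sigma !exprVn invfM. Qed.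

Lemma sigma_eq0 x : (sigma x == 0) = (x == 0).
Proof. by rewrite /sigma mulf_eq0 !frob_eq0 orbb. Qed.

Lemma sigma0 : sigma 0 = 0.
Proof. by apply/eqP; rewrite sigma_eq0. Qed.

Lemma sigma1 : sigma 1 = 1.
Proof. by rewrite /sigma !expr1n mulr1. Qed.

Lemma Nrm_sigma x : Nrm (sigma x) = Nrm x ^+ 2.
Proof. by rewrite /sigma NrmM /Defs.Nrm -!exprM !(mulnC q) !exprM !Nrm_frob. Qed.

Lemma phiS_T : phiS q (T F) = pclass (1, 0, 0).
Proof. by rewrite /T phiS_pclass /phiv /= expr1n frob0. Qed.

Lemma phiS2_T : phiS q (phiS q (T F)) = pclass (0, 1, 0).
Proof. by rewrite phiS_T phiS_pclass /phiv /= expr1n frob0. Qed.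

Lemma phiS_xy0 a b : phiS q (pclass (a, b, 0)) = pclass (0, a ^+ q, b ^+ q).
Proof. by rewrite phiS_pclass /phiv /= frob0. Qed.

Lemma phiS2_xy0 a b : phiS q (phiS q (pclass (a, b, 0))) = pclass (b ^+ q ^+ q, 0, a ^+ q ^+ q).
Proof. by rewrite phiS_xy0 phiS_pclass /phiv /= frob0. Qed.

Lemma vnz_phi_xy0 a b : vnz (0, a ^+ q, b ^+ q) = (a != 0) || (b != 0).
Proof. by rewrite vnzE eqxx !frob_eq0. Qed.

Lemma vnz_phi2_xy0 a b : vnz (b ^+ q ^+ q, 0, a ^+ q ^+ q) = (a != 0) || (b != 0).
Proof. by rewrite vnzE eqxx !frob_eq0 /= orbC. Qed.

Lemma pclass_xy0_neq_phi a b : (a != 0) || (b != 0) ->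
  pclass (a, b, 0) != pclass (0, a ^+ q, b ^+ q).
Proof.
move=> nab; apply/eqP => /(pclass_eq_scale (_ : vnz (a, b, 0)))[]; first by rewrite vnz_xy0.
move=> c _; rewrite /vscale /= mulr0 => -[a0 b0 _].
by move: nab; rewrite b0 a0 frob0 mulr0 eqxx.
Qed.

Lemma Nrm_sum_nz a b : Nrm a + Nrm b != 0 -> (a != 0) || (b != 0).
Proof. by apply: contraR; rewrite negb_or !negbK => /andP[/eqP -> /eqP ->]; rewrite Nrm0 addr0. Qed.

(* The determinant of the phi-orbit of (a, b, 0) is N(a) + N(b). *)
Lemma collinear_orbit a b : (a != 0) || (b != 0) ->
  collinear (pclass (a, b, 0)) (pclass (0, a ^+ q, b ^+ q)) (pclass (b ^+ q ^+ q, 0, a ^+ q ^+ q))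
  = (Nrm a + Nrm b == 0).
Proof.
move=> nab; rewrite collinear_pclass ?vnz_xy0 ?vnz_phi_xy0 ?vnz_phi2_xy0 //.
apply/existsP/eqP => [[l /andP[nl /and3P[/eqP d1 /eqP d2 /eqP d3]]]|HN].
  apply/eqP; apply: contraTT nl => nD; apply: (det3_ortho_eq0 d1 d2 d3).
  by rewrite /det3 /v0 /v1 /v2 /= !NrmE in nD *; move: nD; congr (_ != _); ring.
exists (b * b ^+ q, - (a * b ^+ q), a * a ^+ q); apply/andP; split.
  rewrite vnzE oppr_eq0; case/orP: nab => [a0|b0].
    suff -> : a * a ^+ q != 0 by rewrite !orbT.
    by rewrite mulf_neq0 ?frob_eq0.
  by rewrite mulf_neq0 ?frob_eq0.
rewrite /dotv /v0 /v1 /v2 /=; apply/and3P; split; apply/eqP; try ring.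
by apply: etrans HN; rewrite !NrmE; ring.
Qed.

Lemma typeII_xy0 a b : (a != 0) || (b != 0) ->
  typeII q (pclass (a, b, 0)) = (Nrm a + Nrm b == 0).
Proof.
move=> nab; rewrite /typeII pclass_points ?vnz_xy0 // phiS2_xy0 phiS_xy0.
by rewrite pclass_xy0_neq_phi // collinear_orbit.
Qed.

Lemma typeIIIline_xy0 a b : (a != 0) || (b != 0) ->
  typeIIIline q (pclass (a, b, 0)) = (Nrm a + Nrm b != 0).
Proof.
move=> nab; rewrite /typeIIIline pclass_points ?vnz_xy0 // phiS2_xy0 phiS_xy0.
by rewrite pclass_xy0_neq_phi // concurrentE collinear_orbit.
Qed.

Lemma pclass_in_EsetT p : vnz p ->
  (pclass p \in Eset q (T F)) = (v2 p == 0) && (Nrm (v0 p) + Nrm (v1 p) == 0).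
Proof.
case: p => [[p0 p1] p2] np; rewrite inE (pclass_points np) /= /v0 /v1 /v2 /=.
have [p20|p2n] := eqVneq p2 0; last first.
  apply/negbTE; rewrite negb_and; apply/orP; right.
  apply/existsP => -[L /andP[/pointsP[l nl ->]]].
  rewrite phiS2_T phiS_T !inc_pclass ?vnz100 ?vnz010 //.
  case: l nl => [[l0 l1] l2]; rewrite /dotv /v0 /v1 /v2 /= !mul1r !mul0r !addr0 !add0r.
  move=> nl /and3P[/eqP l00 /eqP l10]; move: nl; rewrite l00 l10 !mulr0 !add0r vnzE !eqxx /=.
  by move=> l2n; rewrite mulf_eq0 (negbTE p2n) (negbTE l2n).
move: np; rewrite {}p20 vnz_xy0 => np /=; rewrite (typeII_xy0 np) -[RHS]andbT.
congr (_ && _); apply/existsP; exists (mT F).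
rewrite /mT pclass_points ?vnz001 // phiS2_T phiS_T !inc_mT ?vnz100 ?vnz010 ?vnz_xy0 //.
by rewrite /v2 /= eqxx.
Qed.

(* The meet of the lines [a,b,0]^phi = [0,a^q,b^q] and [a,b,0]^phi^2 = [b^q^2,0,a^q^2]. *)
Definition meet_pt a b : vec F := (sigma a, sigma b, - (a ^+ q * b ^+ q ^+ q)).

Lemma pclass_in_FsetT p : vnz p -> pclass p \in Fset q (T F) ->
  exists a b, Nrm a + Nrm b != 0 /\ v0 p * sigma b = v1 p * sigma a.
Proof.
case: p => [[p0 p1] p2] np; rewrite inE => /andP[_ /existsP[L]].
case/andP => /pointsP[l nl ->] /and4P[tIII]; rewrite inc_T //.
case: l nl tIII => [[a b] c] nl tIII /= /eqP c0; subst c.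
move: nl tIII; rewrite vnz_xy0 => nab; rewrite phiS2_xy0 phiS_xy0 typeIIIline_xy0 //.
rewrite !inc_pclass ?vnz_phi_xy0 ?vnz_phi2_xy0 // /dotv /= => HN /eqP H1 /eqP H2.
exists a, b; split => //; rewrite /v0 /v1 /sigma /=.
apply/eqP; rewrite -subr_eq0; apply/eqP.
transitivity (b ^+ q * (p0 * b ^+ q ^+ q + p1 * 0 + p2 * a ^+ q ^+ q)
  - a ^+ q ^+ q * (p0 * 0 + p1 * a ^+ q + p2 * b ^+ q)); first by ring.
by rewrite H1 H2 !mulr0 subrr.
Qed.

Lemma vnz_meet_pt a b : (a != 0) || (b != 0) -> vnz (meet_pt a b).
Proof. by rewrite vnzE !sigma_eq0 orbA => ->. Qed.

Lemma meet_pt_in_FsetT a b : Nrm a + Nrm b != 0 -> pclass (meet_pt a b) \in Fset q (T F).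
Proof.
move=> HN; have nab := Nrm_sum_nz HN.
rewrite inE (pclass_points (vnz_meet_pt nab)) /=; apply/existsP; exists (pclass (a, b, 0)).
have nab0 : vnz (a, b, 0) by rewrite vnz_xy0.
rewrite (pclass_points nab0) (inc_T nab0) (typeIIIline_xy0 nab) HN eqxx /=.
rewrite phiS2_xy0 phiS_xy0 !inc_pclass ?vnz_meet_pt ?vnz_phi_xy0 ?vnz_phi2_xy0 //.
by rewrite /dotv /meet_pt /sigma /v0 /v1 /v2 /=; apply/andP; split; apply/eqP; ring.
Qed.

Lemma FigT_points : {subset Fig q (T F) <= points F}.
Proof. by move=> P; rewrite !inE => /orP[] /andP[]. Qed.

Lemma pclass_xy0_in_PrFig x y : (x != 0) || (y != 0) ->
  pclass (x, y, 0) \in Pr (Fig q (T F)) <->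
  Nrm x + Nrm y = 0 \/ exists a b, Nrm a + Nrm b != 0 /\ x * sigma b = y * sigma a.
Proof.
move=> nxy; rewrite pclass_xy0_in_Pr //; last exact: FigT_points.
split => [[p [np]]|].
  rewrite inE => /orP[pE|pF] nP E; last first.
    have [a [b [HN Ep]]] := pclass_in_FsetT np pF; right; exists a, b; split => //.
    by apply: cross_eq_trans nP E _; rewrite mulrC -Ep mulrC.
  left; case: p np pE nP E => [[p0 p1] p2] np.
  rewrite pclass_in_EsetT // /v0 /v1 /v2 /= => /andP[_ /eqP HN] nP E.
  have p0n : p0 != 0.
    apply: contraTneq nP => p00; rewrite p00 eqxx /= negbK -Nrm_eq0.
    by move: HN; rewrite p00 Nrm0 add0r => ->.
  apply: (mulIf (_ : Nrm p0 != 0)); first by rewrite Nrm_eq0.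
  by rewrite mul0r mulrDl -(NrmM y) -E NrmM -mulrDr HN mulr0.
case=> [HN|[a [b [HN E]]]].
  have nxy0 : vnz (x, y, 0) by rewrite vnz_xy0.
  exists (x, y, 0); split => [||//|]; first exact: nxy0; last exact: mulrC.
  by rewrite inE (pclass_in_EsetT nxy0) /v0 /v1 /v2 /= eqxx HN eqxx.
have nab := Nrm_sum_nz HN.
exists (meet_pt a b); split => [||/=|//]; first exact: vnz_meet_pt.
- by rewrite inE (meet_pt_in_FsetT HN) orbT.
- by rewrite /meet_pt /v0 /v1 /= !sigma_eq0.
Qed.

Definition fig_slope s := (Nrm s == -1) || [exists t, (Nrm t != -1) && (sigma t == s)].

Lemma pclass_1s_in_PrFig s : pclass (1, s, 0) \in Pr (Fig q (T F)) <-> fig_slope s.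
Proof.
rewrite pclass_xy0_in_PrFig ?oner_eq0 // Nrm1; split => [[HN|[a [b [HN E]]]]|/orP[/eqP Hs|]].
- by apply/orP; left; rewrite -addr_eq0 addrC HN.
- rewrite mul1r in E; have a0 : a != 0.
    apply: contraNneq HN => a0; move: E; rewrite a0 sigma0 mulr0 => /eqP.
    by rewrite sigma_eq0 => /eqP ->; rewrite Nrm0 addr0.
  apply/orP; right; apply/existsP; exists (b / a).
  rewrite sigmaM sigmaV E mulfK ?sigma_eq0 // eqxx andbT NrmM NrmV.
  apply: contra HN => /eqP Hb; have Na0 : Nrm a != 0 by rewrite Nrm_eq0.
  by rewrite -[Nrm b](divfK Na0) Hb mulN1r subrr.
- by left; rewrite Hs addrN.
case/existsP => t /andP[Ht /eqP Et]; right; exists 1, t.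
by rewrite Nrm1 sigma1 mul1r mulr1 Et; split => //; rewrite addrC addr_eq0.
Qed.

Lemma pclass_010_in_PrFig : pclass (0, 1, 0) \in Pr (Fig q (T F)).
Proof.
apply/pclass_xy0_in_PrFig; rewrite ?oner_eq0 ?orbT //; right; exists 0, 1.
by rewrite Nrm0 Nrm1 add0r oner_eq0 sigma0 sigma1 mulr0 mul0r.
Qed.

Lemma Nrm_sigma_preim u s : u ^+ q = u -> u != 0 -> s != 0 -> Nrm s = u ^+ 2 ->
  Nrm (u / s) = u /\ sigma (u / s) = s.
Proof.
move=> uq u0 s0 Ns; have Nt : Nrm (u / s) = u by rewrite NrmM NrmV Nrm_fixed // Ns; field.
split => //; have t0 : u / s != 0 by rewrite mulf_neq0 ?invr_eq0.
by apply: (mulfI t0); rewrite sigmaE Nt; field.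
Qed.

Lemma fig_slope0 : fig_slope 0.
Proof.
apply/orP; right; apply/existsP; exists 0.
by rewrite Nrm0 sigma0 eqxx andbT eq_sym oppr_eq0 oner_eq0.
Qed.

Lemma fig_slope_even s : ~~ odd q -> fig_slope s.
Proof.
move=> qe; have [->|s0] := eqVneq s 0; first exact: fig_slope0.
have N1 : (-1 : F) = 1.
  by rewrite -[LHS]frobK3 -signr_odd (negbTE qe) expr0 !expr1n.
have [Hs|Hs] := eqVneq (Nrm s) (-1); first by rewrite /fig_slope Hs eqxx.
pose u := Nrm s ^+ q./2.
have u2 : Nrm s = u ^+ 2.
  have hq : (q./2 * 2 = q)%N by rewrite muln2 -[RHS]odd_double_half (negbTE qe) add0n.
  by rewrite /u -exprM hq Nrm_frob.
have uq : u ^+ q = u by rewrite /u exprAC Nrm_frob.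
have u0 : u != 0 by rewrite expf_neq0 // Nrm_eq0.
have [Nt St] := Nrm_sigma_preim uq u0 s0 u2.
apply/orP; right; apply/existsP; exists (u / s); rewrite Nt St eqxx andbT.
by apply: contra Hs => /eqP u1; rewrite u2 u1 sqrrN expr1n N1.
Qed.

Lemma fig_slope_odd s : (-1 : F) != 1 -> s != 0 ->
  fig_slope s = (Nrm s == -1) || nzsqFq q (Nrm s).
Proof.
move=> N1 s0; rewrite /fig_slope; congr (_ || _); apply/existsP/existsP.
  case=> t /andP[_ /eqP St]; exists (Nrm t).
  have t0 : t != 0 by apply: contraNneq s0 => t0; rewrite -St t0 sigma0.
  by rewrite Nrm_frob eqxx Nrm_eq0 t0 -St Nrm_sigma eqxx.
case=> u /and3P[/eqP uq u0 /eqP Ns].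
have [um|um] := eqVneq u (-1).
  have Ns1 : Nrm s = 1 ^+ 2 by rewrite Ns um sqrrN.
  have [Nt St] := Nrm_sigma_preim (expr1n _ _) (oner_neq0 _) s0 Ns1.
  by exists (1 / s); rewrite Nt St eqxx andbT eq_sym.
have [Nt St] := Nrm_sigma_preim uq u0 s0 Ns.
by exists (u / s); rewrite Nt St eqxx um.
Qed.

Definition nzFq : {set F} := [set c | (c ^+ q == c) && (c != 0)].

Lemma expf_pred_q c : c ^+ q = c -> c != 0 -> c ^+ q.-1 = 1.
Proof. by move=> cq c0; apply: (mulIf c0); rewrite -exprSr prednK ?q_gt0 // cq mul1r. Qed.

Lemma Nrm_nzFq s : s != 0 -> Nrm s \in nzFq.
Proof. by move=> s0; rewrite inE Nrm_frob eqxx Nrm_eq0. Qed.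

Lemma card_nz : #|[set s : F | s != 0]| = ((q ^ 3).-1)%N.
Proof. by rewrite -cardF -(cardsC1 0); apply: eq_card => x; rewrite !inE. Qed.

Lemma cube_pred : ((q ^ 3).-1 = q.-1 * (q ^ 2 + q + 1))%N.
Proof. by have := q_gt1; rewrite !expnS expn0 !muln1; nia. Qed.

(* Each fibre of N has at most q^2+q+1 elements (roots of X^(q^2+q+1) - c) and N maps
   F^* into the at most q-1 elements of F_q^*; as |F^*| = (q-1)(q^2+q+1), all these
   bounds are attained. *)
Lemma card_nzFq_Nrm_fibres : #|nzFq| = q.-1 /\
  {in nzFq, forall c, #|[set s | Nrm s == c]| = (q ^ 2 + q + 1)%N}.
Proof.
have fib_le c : (#|[set s | Nrm s == c]| <= q ^ 2 + q + 1)%N.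
  apply: (card_roots_expn (c := c)); first by rewrite addn1.
  by move=> x; rewrite inE => /eqP.
have nzFq_le : (#|nzFq| <= q.-1)%N.
  apply: (card_roots_expn (c := 1)); first by have := q_gt1; lia.
  by move=> x; rewrite inE => /andP[/eqP xq x0]; rewrite expf_pred_q.
have NnzFq : {in [set s : F | s != 0], forall s, Nrm s \in nzFq}.
  by move=> s; rewrite inE; exact: Nrm_nzFq.
have := card_fibres NnzFq; rewrite card_nz cube_pred.
rewrite (eq_bigr (fun c => #|[set s | Nrm s == c]|)); last first.
  move=> c; rewrite inE => /andP[_ c0]; apply: eq_card => x; rewrite !inE.
  by have [->|] := eqVneq x 0; rewrite ?Nrm0 // eq_sym (negbTE c0).
set n := (q ^ 2 + q + 1)%N => Hsum.
have n0 : (0 < n)%N by rewrite /n addn1.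
have Hle : (\sum_(c in nzFq) #|[set s | Nrm s == c]| <= \sum_(c in nzFq) n)%N.
  by apply: leq_sum => c _; apply: fib_le.
have card_nzFq : #|nzFq| = q.-1.
  apply/eqP; rewrite eqn_leq nzFq_le -(leq_pmul2r n0) Hsum.
  by rewrite sum_nat_const in Hle.
have /forall_inP fibres_eq : [forall (c | c \in nzFq), #|[set s | Nrm s == c]| == n].
  rewrite -(leqif_sum (fun c _ => leqif_eq (fib_le c))).2 -Hsum.
  by rewrite sum_nat_const card_nzFq.
by split => // c /fibres_eq/eqP.
Qed.

Lemma card_Nrm_preim (A : {set F}) : A \subset nzFq ->
  #|[set s | Nrm s \in A]| = (#|A| * (q ^ 2 + q + 1))%N.
Proof.
move=> AnzFq; have NA : {in [set s | Nrm s \in A], forall s, Nrm s \in A}.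
  by move=> s; rewrite inE.
rewrite (card_fibres NA) -sum_nat_const; apply: eq_bigr => c cA.
rewrite -(proj2 card_nzFq_Nrm_fibres c (subsetP AnzFq c cA)).
by apply: eq_card => s; rewrite !inE; case: (Nrm s =P c) => [->|_]; rewrite ?cA ?andbF.
Qed.

(* Hilbert's Theorem 90, by counting: x |-> x^(q-1) has fibres of size at most q-1 on F^*,
   so its image, contained in the kernel of N, has at least q^2+q+1 elements. *)
Lemma Nrm_eq1_image : [set x ^+ q.-1 | x in [set x : F | x != 0]] = [set s | Nrm s == 1].
Proof.
apply/eqP; rewrite eqEcard; apply/andP; split.
  apply/subsetP => y /imsetP[x + ->]; rewrite !inE => x0.
  have /[!inE] /andP[/eqP Nq N0] := Nrm_nzFq x0.
  by rewrite /Defs.Nrm exprAC expf_pred_q.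
have n1 : (1 \in nzFq) by rewrite inE expr1n eqxx oner_eq0.
rewrite (proj2 card_nzFq_Nrm_fibres 1 n1).
have q1 : (0 < q.-1)%N by have := q_gt1; lia.
rewrite -(leq_pmul2l q1) -cube_pred -card_nz.
set I := imset _ _.
have xI : {in [set x : F | x != 0], forall x, x ^+ q.-1 \in I}.
  by move=> x xnz; apply: imset_f.
rewrite (card_fibres xI) mulnC -sum_nat_const; apply: leq_sum => k _.
by apply: (card_roots_expn (c := k)) => // x; rewrite inE => /andP[_ /eqP].
Qed.

Lemma Stheta_pclass th Q : th != 0 ->
  Q \in Stheta q th <-> exists s, Nrm s * Nrm th = 1 /\ Q = pclass (1, s, 0).
Proof.
move=> th0; split.
  case/imsetP => x; rewrite inE => x0 ->.
  have xth : x * th != 0 by rewrite mulf_neq0.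
  exists (x ^+ q / (x * th)); split.
    rewrite NrmM NrmV NrmM /Defs.Nrm exprAC -/(Defs.Nrm q x) Nrm_frob; field.
    by rewrite !Nrm_eq0 th0 x0.
  apply: pclass_xy0_eq; rewrite ?xth ?oner_eq0 //.
  by rewrite mulr1 mulrC divfK.
case=> s [Ns ->]; have : s * th \in [set s | Nrm s == 1] by rewrite inE NrmM Ns.
rewrite -Nrm_eq1_image => /imsetP[x]; rewrite inE => x0 Ex.
apply/imsetP; exists x; rewrite ?inE //; apply: pclass_xy0_eq; rewrite ?oner_eq0 //.
  by rewrite frob_eq0 x0 orbT.
by rewrite mul1r mulrCA Ex -exprS prednK ?q_gt0.
Qed.

Lemma nzsqFqV a : nzsqFq q a -> nzsqFq q a^-1.
Proof.
case/existsP => s /and3P[/eqP sq s0 /eqP ->]; apply/existsP; exists s^-1.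
by rewrite exprVn sq eqxx invr_eq0 s0 exprVn eqxx.
Qed.

Lemma bigS_pclass Q : Q \in bigS F q <->
  exists s, [/\ s != 0, nzsqFq q (Nrm s) & Q = pclass (1, s, 0)].
Proof.
split.
  case/bigcupP => th /andP[th0 Hth] /(Stheta_pclass _ th0)[s [Ns ->]].
  have s0 : s != 0.
    by apply/eqP => s0; move: Ns; rewrite s0 Nrm0 mul0r => /eqP; rewrite eq_sym oner_eq0.
  exists s; split => //; have -> : Nrm s = (Nrm th)^-1.
    by apply: (mulIf (_ : Nrm th != 0)); rewrite ?Nrm_eq0 // Ns mulVf ?Nrm_eq0.
  exact: nzsqFqV.
case=> s [s0 Hs ->]; apply/bigcupP; exists s^-1.
  by rewrite invr_eq0 s0 NrmV nzsqFqV.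
by apply/Stheta_pclass; [rewrite invr_eq0 | exists s; rewrite NrmV divff ?Nrm_eq0].
Qed.

Lemma PrFig_decomp : Pr (Fig q (T F)) =
  pclass (0, 1, 0) |: [set pclass (1, s, 0) | s in [set s | fig_slope s]].
Proof.
apply/setP => Q; rewrite in_setU1; apply/idP/idP.
  move=> QPr; have := QPr; rewrite inE => /and3P[Qpts QmT _].
  case: (mT_point_cases Qpts QmT) => [->|[s Qs]]; first by rewrite eqxx.
  by apply/orP; right; apply/imsetP; exists s; rewrite // inE -pclass_1s_in_PrFig -Qs.
case/orP => [/eqP ->|/imsetP[s]]; first exact: pclass_010_in_PrFig.
by rewrite inE => /pclass_1s_in_PrFig Hs ->.
Qed.

Lemma PrFig_even : ~~ odd q -> Pr (Fig q (T F)) = [set P in points F | inc P (mT F)].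
Proof.
move=> qe; apply/setP => Q; rewrite [RHS]inE; apply/idP/andP => [|[Qpts QmT]].
  by rewrite inE => /and3P[-> ->].
case: (mT_point_cases Qpts QmT) => [->|[s ->]]; first exact: pclass_010_in_PrFig.
exact/pclass_1s_in_PrFig/fig_slope_even.
Qed.

Section OddCharacteristic.
Hypotheses (qo : odd q) (N1 : (-1 : F) != 1).

Lemma frobN x : (- x) ^+ q = - x ^+ q.
Proof. by rewrite exprNn -signr_odd qo mulN1r. Qed.

Lemma Nrm_N1 : Nrm (-1 : F) = -1.
Proof. by rewrite /Defs.Nrm -signr_odd !oddD oddX qo. Qed.

Definition nzsq : {set F} := [set a | nzsqFq q a].

Lemma nzsq_sub : nzsq \subset nzFq.
Proof.
apply/subsetP => a; rewrite !inE => /existsP[u /and3P[/eqP uq u0 /eqP ->]].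
by rewrite -exprAC uq eqxx expf_neq0.
Qed.

Lemma N1_nzFq : -1 \in nzFq.
Proof. by rewrite inE frobN expr1n eqxx oppr_eq0 oner_eq0. Qed.

(* u |-> u^2 maps F_q^* onto the squares, two-to-one since u != -u. *)
Lemma card_nzsq : (#|nzsq| * 2 = q.-1)%N.
Proof.
have sq_nzsq : {in nzFq, forall u, u ^+ 2 \in nzsq}.
  by move=> u; rewrite !inE => /andP[uq u0]; apply/existsP; exists u; rewrite uq u0 eqxx.
rewrite -(proj1 card_nzFq_Nrm_fibres) (card_fibres sq_nzsq) -sum_nat_const.
apply: eq_bigr => a; rewrite inE => /existsP[u /and3P[/eqP uq u0 /eqP ->]].
have -> : [set x in nzFq | x ^+ 2 == u ^+ 2] = [set u; - u].
  apply/setP => x; rewrite !inE; apply/idP/idP.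
    by case/andP => _; rewrite -subr_eq0 subr_sqr mulf_eq0 subr_eq0 addr_eq0.
  by case/orP => /eqP ->; rewrite ?frobN uq ?sqrrN !eqxx ?oppr_eq0 u0.
rewrite cards2; suff -> : u != - u by []; apply: contra N1 => /eqP Eu.
by apply/eqP; apply: (mulfI u0); rewrite mulrN1 mulr1 -Eu.
Qed.

(* If q = 4m+1, only 2m elements of F_q^* are roots of X^(2m) - 1, so some y has
   y^(2m) = -1; if q = 4m+3, s^2 = -1 would give 1 = s^(q-1) = (-1)^(2m+1). *)
Lemma nzsqFq_N1 : nzsqFq q (-1 : F) = (q %% 4 == 1)%N.
Proof.
have hq := divn_eq q 4; set m := (q %/ 4)%N in hq.
have r2 : (q %% 4 %% 2 = 1)%N by rewrite modn_dvdm // modn2 qo.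
have r4 : (q %% 4 < 4)%N by rewrite ltn_mod.
apply/idP/idP.
  case/existsP => s /and3P[/eqP sq s0 /eqP sm]; apply: contraT => r1.
  have := expf_pred_q sq s0.
  have -> : (q.-1 = 2 * (2 * m + 1))%N by move: hq r2 r4 r1; lia.
  by rewrite exprM -sm -signr_odd oddD oddM /= expr1 => /eqP; rewrite (negbTE N1).
move=> /eqP r1; have qm : (q.-1 = 4 * m)%N by move: hq r1; lia.
have m0 : (0 < m)%N by move: hq r1 q_gt1; lia.
have [y yU yn] : exists2 y, y \in nzFq & y ^+ (2 * m) != 1.
  apply/exists_inP; apply: contraT; rewrite negb_exists_in => /forall_inP y1.
  have : (#|nzFq| <= 2 * m)%N.
    by apply: (card_roots_expn (c := 1)) => [|x /y1 /negPn /eqP]; first lia.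
  by rewrite (proj1 card_nzFq_Nrm_fibres) qm; lia.
move: yU; rewrite inE => /andP[/eqP yq y0].
have y4 : (y ^+ (2 * m)) ^+ 2 = 1 by rewrite -exprM mulnC mulnA -qm expf_pred_q.
have ym : y ^+ (2 * m) = -1.
  move/eqP: y4; rewrite sqrf_eq1 => /orP[/eqP y1|/eqP //].
  by rewrite y1 eqxx in yn.
apply/existsP; exists (y ^+ m).
by rewrite exprAC yq eqxx expf_neq0 //= -exprM mulnC ym eqxx.
Qed.

Lemma PrFig_odd : Pr (Fig q (T F)) =
  [set pclass ((1, 0, 0) : vec F); pclass ((0, 1, 0) : vec F)] :|: Stheta q (-1) :|: bigS F q.
Proof.
have Nm10 : (-1 : F) != 0 by rewrite oppr_eq0 oner_eq0.
apply/setP => Q; rewrite PrFig_decomp in_setU1 !inE; apply/idP/idP.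
  case/orP => [->|/imsetP[s]]; first by rewrite orbT.
  rewrite inE => Hs ->; have [->|s0] := eqVneq s 0; first by rewrite eqxx.
  move: Hs; rewrite fig_slope_odd // => /orP[/eqP Ns|Hs].
    apply/orP; left; apply/orP; right; apply/Stheta_pclass => //.
    by exists s; rewrite Ns Nrm_N1 mulN1r opprK.
  by apply/orP; right; apply/bigS_pclass; exists s.
case/orP => [/orP[/orP[/eqP ->|->]|]|] //.
- by apply/orP; right; apply/imsetP; exists 0; rewrite ?inE ?fig_slope0.
- case/(Stheta_pclass _ Nm10) => s [+ ->]; rewrite Nrm_N1 mulrN1 => /eqP.
  rewrite eqr_oppLR => /eqP Ns; apply/orP; right; apply/imsetP; exists s => //.
  by rewrite inE /fig_slope Ns eqxx.
case/bigS_pclass => s [s0 Hs ->]; apply/orP; right; apply/imsetP; exists s => //.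
by rewrite inE fig_slope_odd // Hs orbT.
Qed.

Lemma card_fig_slope :
  #|[set s | fig_slope s]| = (1 + (~~ nzsqFq q (-1 : F)%R + #|nzsq|) * (q ^ 2 + q + 1))%N.
Proof.
have -> : [set s | fig_slope s] = 0 |: [set s | Nrm s \in (-1 : F) |: nzsq].
  apply/setP => s; rewrite !inE; have [->|s0] := eqVneq s 0; first exact: fig_slope0.
  by rewrite fig_slope_odd.
have nzsq0 : ~~ nzsqFq q (0 : F).
  by apply/existsPn => u; rewrite [0 == _]eq_sym sqrf_eq0 andNb andbF.
rewrite [LHS]cardsU1 inE Nrm0 !inE [0 == _]eq_sym oppr_eq0 oner_eq0 (negbTE nzsq0).
rewrite card_Nrm_preim ?subUset ?sub1set ?N1_nzFq ?nzsq_sub //.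
by rewrite cardsU1 inE.
Qed.

Lemma card_PrFig_odd : #|Pr (Fig q (T F))| =
  (if q %% 4 == 1 then 2 + (q - 1) %/ 2 * (q ^ 2 + q + 1)
   else 2 + (q + 1) %/ 2 * (q ^ 2 + q + 1))%N.
Proof.
rewrite PrFig_decomp cardsU1 (card_imset _ (@pclass_1s_inj F)) card_fig_slope.
have -> : pclass (0, 1, 0) \notin [set pclass (1, s, 0) | s in [set s | fig_slope s]].
  by apply/imsetP => -[s _]; apply/eqP; exact: pclass_010_neq_1s.
rewrite nzsqFq_N1; have := card_nzsq; have := q_gt1.
case: ifP => _ q1 Hsq.
  by have -> : ((q - 1) %/ 2 = #|nzsq|)%N by lia.
by have -> : ((q + 1) %/ 2 = 1 + #|nzsq|)%N by lia.
Qed.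

End OddCharacteristic.
End CubicExtension.

Unset Implicit Arguments.

Theorem theorem6p1 (F : finFieldType) (q : nat) :
  (exists p k : nat, [/\ prime p, (0 < k)%N & q = (p ^ k)%N]) ->
  #|F| = (q ^ 3)%N ->
  (~~ odd q -> Pr (Fig q (T F)) = [set P in points F | inc P (mT F)]) /\
  (odd q ->
     Pr (Fig q (T F)) =
       [set pclass ((1, 0, 0) : vec F); pclass ((0, 1, 0) : vec F)]
         :|: Stheta q (-1) :|: bigS F q
     /\ #|Pr (Fig q (T F))| =
          (if q %% 4 == 1 then 2 + (q - 1) %/ 2 * (q ^ 2 + q + 1)
           else 2 + (q + 1) %/ 2 * (q ^ 2 + q + 1))%N).
Proof.
case=> p [k [p_pr k_gt0 ->]] cardF; split; first exact: PrFig_even.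
move=> qo; have N1 : (-1 : F) != 1.
  apply: contraL qo => /eqP N1.
  have pF : p \in [pchar F] by apply: (card_finPcharP (n := k * 3)); rewrite // cardF expnM.
  have : 2 \in [pchar F] by rewrite inE /= mulr2n -{1}N1 addNr eqxx.
  by rewrite (pcharf_eq pF) => /eqP <-; rewrite oddX /= orbF -lt0n.
by split; [exact: PrFig_odd | exact: card_PrFig_odd].
Qed.
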